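(* Let $p,q$ be positive integers, $e>1$ an integer, $s$ a positive integer and $m$ a non-negative integer. If $$\tfrac12 G_{2^m s}\equiv 1\pmod{2^e}\quad\text{and}\quad \tfrac12 G_{2^m s}\not\equiv 1\pmod{2^{e+1}},$$ then for every positive integer $l$, $$\tfrac12 G_{2^{m+l}s}\equiv 1\pmod{2^{e+2l-1}},\quad \tfrac12 G_{2^{m+l}s}\equiv 1\pmod{2^{e+2l}},\quad \tfrac12 G_{2^{m+l}s}\not\equiv 1\pmod{2^{e+2l+1}}.$$
   Context: $A=pq+2$, $B=\sqrt{A^2-4}$, $G_n=\left(\frac{A+B}{2}\right)^n+\left(\frac{A-B}{2}\right)^n$ (an integer); congruences involving $\frac12 G_n$ require $\frac12G_n$ to be an integer. *)

From Stdlib Require Import Reals ZArith Arith.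
Open Scope R_scope.

Definition Aval (p q : nat) : R := INR (p * q + 2).
Definition Bval (p q : nat) : R := sqrt (Aval p q ^ 2 - 4).
Definition G (p q : nat) (n : nat) : R :=
  ((Aval p q + Bval p q) / 2) ^ n + ((Aval p q - Bval p q) / 2) ^ n.

(* x ≡ a (mod M) for a real x: x - a is an integer multiple of M.
   (In particular this forces x to be an integer when a is.) *)
Definition congR (x a : R) (M : nat) : Prop :=
  exists k : Z, x - a = IZR k * INR M.

(* Write H_n := G_n / 2.  Since ((A+B)/2)((A-B)/2) = 1, doubling the index
   gives H_(2n) = 2 H_n^2 - 1.  If H_n - 1 = k 2^e with k odd and e >= 2, then
   2 H_n^2 - 2 = 2^(e+2) (k + 2^(e-1) k^2) with the cofactor still odd, so each
   doubling raises the exact power of 2 dividing H_n - 1 by two. *)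

From Stdlib Require Import Reals ZArith Arith Lia Lra Psatz.
Open Scope R_scope.

Definition odd_mul_pow2 (y : R) (e : nat) : Prop :=
  exists k : Z, Z.odd k = true /\ y = IZR k * 2 ^ e.

Lemma INR_pow2 (n : nat) : INR (2 ^ n) = 2 ^ n.
Proof. rewrite pow_INR. reflexivity. Qed.

Lemma G_double (p q n : nat) : G p q (2 * n) = G p q n ^ 2 - 2.
Proof.
  unfold G. set (a := Aval p q). set (b := Bval p q).
  assert (a_ge2 : 2 <= a).
  { unfold a, Aval. rewrite plus_INR. pose proof (pos_INR (p * q)). simpl. lra. }
  assert (b_sq : b * b = a ^ 2 - 4).
  { unfold b, Bval. fold a. apply sqrt_sqrt. nra. }
  assert (roots_mul : ((a + b) / 2) ^ n * ((a - b) / 2) ^ n = 1).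
  { rewrite <- Rpow_mult_distr. replace ((a + b) / 2 * ((a - b) / 2)) with 1 by nra.
    apply pow1. }
  rewrite (Nat.mul_comm 2 n), !pow_mult. nra.
Qed.

Lemma half_G_double (p q n : nat) : G p q (2 * n) / 2 = 2 * (G p q n / 2) ^ 2 - 1.
Proof. rewrite G_double. field. Qed.

Lemma odd_mul_pow2_sq (x : R) (e : nat) : (1 < e)%nat ->
  odd_mul_pow2 (x - 1) e -> odd_mul_pow2 (2 * x ^ 2 - 1 - 1) (e + 2).
Proof.
  intros e_gt1 [k [k_odd x_eq]].
  destruct e as [|[|e]]; try lia.
  exists (k + 2 ^ Z.of_nat (S e) * k * k)%Z. split.
  - rewrite Z.odd_add, k_odd, Nat2Z.inj_succ, Z.pow_succ_r by lia.
    rewrite <- !Z.mul_assoc, Z.odd_mul. reflexivity.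
  - replace x with (1 + IZR k * 2 ^ S (S e)) by lra.
    rewrite plus_IZR, !mult_IZR, <- pow_IZR, pow_add. simpl. ring.
Qed.

Lemma odd_mul_pow2_half_G (p q e n l : nat) : (1 < e)%nat ->
  odd_mul_pow2 (G p q n / 2 - 1) e ->
  odd_mul_pow2 (G p q (2 ^ l * n) / 2 - 1) (e + 2 * l).
Proof.
  intros e_gt1 Hn. induction l as [|l IH].
  - rewrite Nat.mul_0_r, Nat.add_0_r, Nat.mul_1_l. exact Hn.
  - rewrite Nat.pow_succ_r', <- Nat.mul_assoc, half_G_double.
    replace (e + 2 * S l)%nat with (e + 2 * l + 2)%nat by lia.
    apply odd_mul_pow2_sq; [lia | exact IH].
Qed.

Lemma congR_pow2_le (x a : R) (e n : nat) : (n <= e)%nat ->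
  congR x a (2 ^ e) -> congR x a (2 ^ n).
Proof.
  intros n_le [k Hk]. exists (k * 2 ^ Z.of_nat (e - n))%Z.
  rewrite Hk, mult_IZR, <- pow_IZR, !INR_pow2, Rmult_assoc, <- pow_add.
  do 2 f_equal. lia.
Qed.

Lemma odd_mul_pow2_congR (x : R) (e : nat) :
  odd_mul_pow2 (x - 1) e -> congR x 1 (2 ^ e).
Proof. intros [k [_ Hk]]. exists k. rewrite INR_pow2. exact Hk. Qed.

Lemma odd_mul_pow2_not_congR (x : R) (e : nat) :
  odd_mul_pow2 (x - 1) e -> ~ congR x 1 (2 ^ (e + 1)).
Proof.
  intros [k [k_odd Hk]] [j Hj].
  rewrite Hk, INR_pow2, pow_add, pow_1 in Hj.
  assert (k_even : k = (2 * j)%Z).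
  { apply eq_IZR. rewrite mult_IZR.
    apply (Rmult_eq_reg_r (2 ^ e)); [lra | apply pow_nonzero; lra]. }
  rewrite k_even, Z.odd_even in k_odd. discriminate.
Qed.

Lemma congR_not_congR_odd_mul_pow2 (x : R) (e : nat) :
  congR x 1 (2 ^ e) -> ~ congR x 1 (2 ^ (e + 1)) -> odd_mul_pow2 (x - 1) e.
Proof.
  intros [k Hk] not_succ. exists k. split.
  - destruct (Z.odd k) eqn:k_parity; [reflexivity | exfalso].
    assert (k_half : k = (2 * Z.div2 k)%Z).
    { rewrite (Z.div2_odd k) at 1. rewrite k_parity. simpl. lia. }
    apply not_succ. exists (Z.div2 k).
    rewrite Hk, k_half at 1. rewrite mult_IZR, !INR_pow2, pow_add. ring.
  - rewrite Hk, INR_pow2. reflexivity.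
Qed.

Theorem lemma4 (p q e s m : nat) :
  (0 < p)%nat -> (0 < q)%nat -> (1 < e)%nat -> (0 < s)%nat ->
  congR (G p q (2 ^ m * s) / 2) 1 (2 ^ e) ->
  ~ congR (G p q (2 ^ m * s) / 2) 1 (2 ^ (e + 1)) ->
  forall l : nat, (0 < l)%nat ->
    congR (G p q (2 ^ (m + l) * s) / 2) 1 (2 ^ (e + 2 * l - 1)) /\
    congR (G p q (2 ^ (m + l) * s) / 2) 1 (2 ^ (e + 2 * l)) /\
    ~ congR (G p q (2 ^ (m + l) * s) / 2) 1 (2 ^ (e + 2 * l + 1)).
Proof.
  intros _ _ e_gt1 _ cong_e not_cong_succ l _.
  assert (exact_l : odd_mul_pow2 (G p q (2 ^ (m + l) * s) / 2 - 1) (e + 2 * l)).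
  { rewrite Nat.pow_add_r, (Nat.mul_comm (2 ^ m)), <- Nat.mul_assoc.
    apply odd_mul_pow2_half_G; [exact e_gt1 |].
    exact (congR_not_congR_odd_mul_pow2 _ _ cong_e not_cong_succ). }
  split; [| split].
  - apply (congR_pow2_le _ _ (e + 2 * l)); [lia |].
    exact (odd_mul_pow2_congR _ _ exact_l).
  - exact (odd_mul_pow2_congR _ _ exact_l).
  - exact (odd_mul_pow2_not_congR _ _ exact_l).
Qed.
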